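(* Consider the UAV Persistent Service model in the homogeneous case $g_i=g$ for all $i\in\mathcal N$, with $N=|\mathcal N|\ge 1$, $f>0$, $c\ge 0$, $g>0$, $2g<f$. Run the HoRR schedule with a fleet of $$M=N+\left\lceil \frac{c+2g}{f-2g}\,N\right\rceil$$ UAVs. Then at every dispatch time a fully charged backup UAV is available at the RS, no UAV ever flies longer than $f$ time units between two recharges, and every location in $\mathcal N$ is covered at every time $t\ge 0$.
   Context: UAV Persistent Service model: there is a single recharging station (RS) and a finite set $\mathcal N$ of $N$ aerial locations, served by a fleet of identical UAVs. A UAV with a full battery can fly for at most $f>0$ time units; replacing/recharging its battery at the RS takes $c\ge 0$ time units, after which it is fully charged again. Flying between the RS and location $i$ (in either direction) takes the displacement time $g_i>0$, with $2g_i<f$. A UAV's activity consists of sorties: it leaves the RS fully charged, flies to one location, stays there (it is then said to cover that location), flies back to the RS, and the total airborne time of the sortie is at most $f$; back at the RS it spends $c$ time units recharging (and may then wait idle) before its next sortie. At time $0$ every UAV is fully charged, either at the RS or already at a location. A location is covered at time $t$ if some UAV is at that location at time $t$. HoRR schedule (homogeneous case $g_i=g$): let $x=\frac{f-2g}{N}$. At time $0$, one fully charged UAV is placed at each of the $N$ locations; the remaining UAVs (backups) are fully charged at the RS. For every $k=1,2,\dots$: a fully charged backup UAV departs the RS at time $kx-g$ (if this is negative it is considered already en route at time $0$) and arrives at time $kx$ at the location of the serving UAV with the least remaining energy (ties broken arbitrarily); it takes over that location, and the relieved UAV flies back to the RS (arriving at $kx+g$), recharges (until $kx+g+c$) and then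 becomes a backup. Backups are dispatched in the order in which they became ready. *)

From HB Require Import structures.
From mathcomp Require Import all_boot all_order all_algebra.
Set Implicit Arguments. Unset Strict Implicit. Unset Printing Implicit Defensive.
Import Order.TTheory GRing.Theory Num.Theory.
Local Open Scope ring_scope.

Section HoRR.
Variables (R : archiRealFieldType) (N : nat) (f c g : R).

Definition slot : R := (f - 2 * g) / N%:R.

Definition fleet : nat :=
  (N + `|Num.ceil ((c + 2 * g) / (f - 2 * g) * N%:R)|)%N.

(* UAVs are identified by natural numbers 0 .. fleet-1.
   State of the system just after a relief event:
   - serv i   : the UAV currently serving location i;
   - start u  : departure time (from the RS, fully charged) of the current /
                last sortie of u (0 for the UAVs placed at a location at time 0,
                which are fully charged at time 0);
   - ready u  : time at which u (a backup) is back at the RS and recharged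
                (0 for the initial backups);
   - queue    : the backups at the RS, in the order in which they became ready. *)
Record state := St {
  serv : 'I_N -> nat;
  start : nat -> R;
  ready : nat -> R;
  queue : seq nat }.

Definition init_state : state :=
  St (fun i => nat_of_ord i) (fun _ => 0) (fun _ => 0) (iota N (fleet - N)).

Definition energy (s : state) (t : R) (u : nat) : R := f - (t - start s u).

Definition dispatched (s : state) : nat := head 0%N (queue s).

(* Relief event at time t (= k * slot) at location l: the dispatched backup,
   which departed at t - g, takes over l; the relieved UAV v flies back
   (arriving at t + g), recharges until t + g + c, and joins the queue. *)
Definition step (l : 'I_N) (t : R) (s : state) : state :=
  let u := dispatched s in
  let v := serv s l in
  St (fun i => if i == l then u else serv s i)
     (fun w => if w == u then t - g else start s w)
     (fun w => if w == v then t + g + c else ready s w)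
     (rcons (behead (queue s)) v).

(* The run of the HoRR schedule for the sequence of relieved locations
   [loc k] (k >= 1, relief at time k * slot); [run loc k] is the state
   after the k-th relief. *)
Fixpoint run (loc : nat -> 'I_N) (k : nat) : state :=
  match k with
  | 0 => init_state
  | k'.+1 => step (loc k) (k%:R * slot) (run loc k')
  end.

Definition horr_choice (loc : nat -> 'I_N) : Prop :=
  forall (k : nat) (i : 'I_N),
    energy (run loc k) (k.+1%:R * slot) (serv (run loc k) (loc k.+1))
    <= energy (run loc k) (k.+1%:R * slot) (serv (run loc k) i).

(* UAV u is at location l at time t: between two consecutive relief times
   k*slot and (k+1)*slot the assignment of state k holds (at a relief time
   both the arriving and the departing UAV are at the location). *)
Definition at_loc (loc : nat -> 'I_N) (u : nat) (l : 'I_N) (t : R) : Prop :=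
  exists k : nat, serv (run loc k) l = u /\
                  k%:R * slot <= t /\ t <= k.+1%:R * slot.

Definition covered (loc : nat -> 'I_N) (l : 'I_N) (t : R) : Prop :=
  exists u : nat, (u < fleet)%N /\ at_loc loc u l t.

End HoRR.

From HB Require Import structures.
From mathcomp Require Import all_boot all_order all_algebra.
From mathcomp Require Import ring lra zify.
Set Implicit Arguments. Unset Strict Implicit. Unset Printing Implicit Defensive.
Import Order.TTheory GRing.Theory Num.Theory.
Local Open Scope ring_scope.

(* With K = M - N backups and slot x, the choice of M gives c + 2g <= K x.
   The backup queue is FIFO of constant length K, so the UAV dispatched at
   slot k was relieved K slots earlier and has had K x - 2g >= c time units
   to fly back and recharge.  HoRR always relieves the earliest-started
   serving UAV; by induction on k, the serving UAV whose start time has rank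
   r among the N current ones started no earlier than slot k + r - N (minus g).
   So a location not relieved since slot k is relieved at some slot k' with
   k' x <= N x + start + g, i.e. after at most N x + 2g = f airborne time;
   the same bound shows every location is relieved again eventually. *)

Lemma card_update (T : finType) (P Q : pred T) (a : T) :
  P a -> {in predC1 a, Q =1 P} -> (#|Q| + ~~ Q a = #|P|)%N.
Proof.
move=> Pa QP; rewrite (cardD1 a P) (cardD1 a Q) -[a \in P]/(P a) Pa.
have -> : #|[predD1 Q & a]| = #|[predD1 P & a]|.
  by apply: eq_card => i; rewrite !inE; case: eqP => // /eqP ia; apply: QP.
by rewrite -[a \in Q]/(Q a); case: (Q a); rewrite /= ?addn0 // add0n addnC.
Qed.

Section HoRRSchedule.
Variables (R : archiRealFieldType) (N : nat) (f c g : R) (loc : nat -> 'I_N).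
Hypotheses (N_gt0 : (0 < N)%N) (c_ge0 : 0 <= c) (g_gt0 : 0 < g) (twog_lt_f : 2 * g < f).

Local Notation x := (slot N f g).
Local Notation K := (fleet N f c g - N)%N.
Local Notation st k := (run f c g loc k).

Lemma slot_gt0 : 0 < x.
Proof. by rewrite divr_gt0 ?ltr0n // subr_gt0. Qed.

Lemma N_slot : N%:R * x = f - 2 * g.
Proof. by rewrite mulrC divfK // pnatr_eq0 -lt0n. Qed.

Lemma backups_slot_ge : c + 2 * g <= K%:R * x.
Proof.
rewrite /fleet addKn.
set y := (c + 2 * g) / (f - 2 * g) * N%:R.
have y_gt0 : 0 < y.
  by rewrite mulr_gt0 ?divr_gt0 ?ltr0n ?subr_gt0 //; move: c_ge0 g_gt0; lra.
have -> : c + 2 * g = y * x.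
  rewrite /y /slot; field.
  by rewrite pnatr_eq0 -lt0n N_gt0 subr_eq0 (gt_eqF twog_lt_f).
have ceil_y_ge0 : 0 <= Num.ceil y by rewrite ceil_ge0 //; move: y_gt0; lra.
rewrite natr_absz ger0_norm //.
by rewrite ler_pM2r ?slot_gt0 // ceil_ge.
Qed.

Lemma backups_gt0 : (0 < K)%N.
Proof.
have := backups_slot_ge; case: K => [|//]; rewrite mul0r; move: c_ge0 g_gt0; lra.
Qed.

Record wf_state (s : state R N) : Prop := {
  serv_lt_fleet : forall i, (serv s i < fleet N f c g)%N;
  queue_lt_fleet : forall w, w \in queue s -> (w < fleet N f c g)%N;
  serv_inj : injective (serv s);
  serv_notin_queue : forall i, serv s i \notin queue s;
  queue_uniq : uniq (queue s);
  size_queue : size (queue s) = K }.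

Lemma wf_init : wf_state (st 0).
Proof.
split => /= [i|w|i j|i||]; rewrite ?mem_iota ?size_iota ?iota_uniq /fleet //.
- by have := ltn_ord i; lia.
- by lia.
- exact: ord_inj.
- by rewrite negb_and; have := ltn_ord i; lia.
Qed.

Lemma wf_step l t s : wf_state s -> wf_state (step c g l t s).
Proof.
case=> servP queueP injP disjP uniqP sizeP.
rewrite /step /dispatched; move: queueP disjP uniqP sizeP.
case: (queue s) => [|u q] queueP disjP uniqP sizeP.
  by move: backups_gt0; rewrite -sizeP.
have uq : u \in u :: q by rewrite mem_head.
move: uniqP; rewrite cons_uniq => /andP[uNq uniq_q].
have vNuq : serv s l \notin u :: q by apply: disjP.
move: (vNuq); rewrite in_cons negb_or => /andP[vNu vNq].
split => /=.
- by move=> i; case: eqP => _; [apply: queueP | apply: servP].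
- move=> w; rewrite mem_rcons in_cons => /orP[/eqP->|wq]; first exact: servP.
  by apply: queueP; rewrite in_cons wq orbT.
- move=> i j; case: (eqVneq i l) => [->|il]; case: (eqVneq j l) => [->|jl] //.
  + by move=> E; have := disjP j; rewrite -E uq.
  + by move=> E; have := disjP i; rewrite E uq.
  + exact: injP.
- move=> i; rewrite mem_rcons in_cons negb_or; case: (eqVneq i l) => [_|il].
    by rewrite uNq andbT eq_sym.
  have := disjP i; rewrite in_cons negb_or => /andP[_ ->].
  by rewrite andbT (inj_eq injP).
- by rewrite rcons_uniq vNq.
- by rewrite size_rcons -sizeP.
Qed.

Lemma wf_run k : wf_state (st k).
Proof. by elim: k => [|k IHk]; [apply: wf_init | apply: wf_step]. Qed.

Lemma dispatched_in_queue k : dispatched (st k) \in queue (st k).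
Proof.
have := size_queue (wf_run k); rewrite /dispatched.
case: (queue (st k)) => [|u q] /=; last by rewrite mem_head.
by move=> E; move: backups_gt0; rewrite -E.
Qed.

Lemma serv_neq_dispatched k i : serv (st k) i != dispatched (st k).
Proof.
apply: contraNneq (serv_notin_queue (wf_run k) i) => ->.
exact: dispatched_in_queue.
Qed.

(* The i-th backup in the queue at slot k was relieved at slot k + i + 1 - K
   at the latest (or was an initial backup). *)
Lemma ready_queue_le k i : (i < K)%N ->
  ready (st k) (nth 0%N (queue (st k)) i)
    <= Num.max 0 (((k + i + 1)%:R - K%:R) * x + g + c).
Proof.
elim: k i => [|k IHk] i iK; first by rewrite le_max lexx.
have [_ _ _ disjP _ sizeP] := wf_run k.
have IHi := IHk i.+1.
rewrite /= /step /dispatched /=; move: disjP sizeP IHi.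
case: (queue (st k)) => [|u q] disjP sizeP IHi /=.
  by move: backups_gt0; rewrite -sizeP.
move: sizeP => /= sizeP; rewrite nth_rcons.
case: ltnP => [iq|qi].
  have vNq : nth 0%N q i != serv (st k) (loc k.+1).
    by apply: contraNneq (disjP (loc k.+1)) => <-; rewrite in_cons mem_nth ?orbT.
  rewrite (negbTE vNq) addSnnS.
  by apply: IHi; lia.
have -> : i = size q by lia.
rewrite !eqxx le_max; apply/orP; right.
have -> : (k.+1 + size q + 1 = k.+1 + K)%N by lia.
by rewrite natrD addrK.
Qed.

Lemma backup_available k :
  queue (st k) != [::] /\
  ready (st k) (dispatched (st k)) <= Num.max 0 (k.+1%:R * x - g).
Proof.
split; first by apply: contraTneq (dispatched_in_queue k) => ->.
have := ready_queue_le k backups_gt0; rewrite nth0 addn0 addn1.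
rewrite !le_max => /orP[->//|le_ready]; apply/orP; right.
apply: le_trans le_ready _.
have := backups_slot_ge; rewrite mulrBl; lra.
Qed.

Definition start_at k (i : 'I_N) := start (st k) (serv (st k) i).

Lemma start_at_step k i :
  start_at k.+1 i = if i == loc k.+1 then k.+1%:R * x - g else start_at k i.
Proof.
rewrite /start_at /= /step /=.
have := serv_neq_dispatched k i.
by case: (i == loc k.+1) => [|/negbTE->]; rewrite ?eqxx.
Qed.

Lemma start_at_stable k l n :
  (forall j, (k < j <= k + n)%N -> loc j != l) ->
  serv (st (k + n)) l = serv (st k) l /\ start_at (k + n) l = start_at k l.
Proof.
elim: n => [|n IHn] Hloc; first by rewrite addn0.
have [IHserv IHstart] : serv (st (k + n)) l = serv (st k) l /\
                        start_at (k + n) l = start_at k l.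
  by apply: IHn => j /andP[kj jn]; apply: Hloc; rewrite kj /=; lia.
have /negbTE ln : l != loc (k + n).+1 by rewrite eq_sym; apply: Hloc; lia.
by rewrite addnS start_at_step /= /step /= ln.
Qed.

Lemma covered_everywhere t l : 0 <= t -> covered f c g loc l t.
Proof.
move=> t_ge0; have x_gt0 := slot_gt0.
set k := Num.truncn (t / x).
have /andP[kt tk] : k%:R <= t / x < k.+1%:R.
  by apply: truncn_itv; rewrite divr_ge0 // ltW.
exists (serv (st k) l); split; first exact: serv_lt_fleet (wf_run k) l.
exists k; split => //.
by rewrite -ler_pdivlMr // kt -ler_pdivrMr // ltW.
Qed.

Hypothesis horr : horr_choice f c g loc.

Lemma horr_start_min k i : start_at k (loc k.+1) <= start_at k i.
Proof. by have := horr k i; rewrite /energy /start_at; lra. Qed.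

Definition start_rank k l := #|[pred i | start_at k i <= start_at k l]|.

Lemma start_rank_gt0 k l : (0 < start_rank k l)%N.
Proof. by apply/card_gt0P; exists l; rewrite inE. Qed.

Lemma start_rank_le k l : (start_rank k l <= N)%N.
Proof. by rewrite -[N in (_ <= N)%N]card_ord max_card. Qed.

Lemma start_rank_bound k l :
  (k + start_rank k l)%:R * x <= N%:R * x + start_at k l + g.
Proof.
have x_gt0 := slot_gt0.
have rank_le_x k' l' : (start_rank k' l')%:R * x <= N%:R * x.
  by rewrite ler_pM2r // ler_nat start_rank_le.
elim: k l => [|k IHk] l.
  by rewrite add0n /start_at /=; have := rank_le_x 0%N l; move: g_gt0; lra.
have rank_le := rank_le_x k.+1 l; rewrite natrD mulrDl.
case: (eqVneq l (loc k.+1)) => [la|la].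
  by rewrite start_at_step -la eqxx; lra.
have start_l : start_at k.+1 l = start_at k l by rewrite start_at_step (negbTE la).
have rank_step : (start_rank k.+1 l +
    ~~ (k.+1%:R * x - g <= start_at k l)%R = start_rank k l)%N.
  have -> : (k.+1%:R * x - g <= start_at k l) =
            (loc k.+1 \in [pred i | start_at k.+1 i <= start_at k.+1 l]).
    by rewrite inE start_l start_at_step eqxx.
  apply: card_update; first exact: horr_start_min.
  by move=> i; rewrite !inE start_l start_at_step => /negbTE->.
have := IHk l; rewrite start_l -rank_step.
case: (lerP (k.+1%:R * x - g) (start_at k l)) => [relieved_late|_] /=.
  by move=> _; move: relieved_late rank_le; lra.
by rewrite addn1 addnS -addSn natrD mulrDl.
Qed.

Lemma unrelieved_bound k l n :
  (forall j, (k < j <= k + n)%N -> loc j != l) ->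
  (k + n).+1%:R * x <= f - g + start_at k l.
Proof.
move=> /start_at_stable[_ <-].
have rank_ge1 : ((k + n).+1 <= k + n + start_rank (k + n) l)%N.
  by rewrite -addn1 leq_add2l start_rank_gt0.
apply: le_trans (_ : _ <= (k + n + start_rank (k + n) l)%:R * x) _.
  by rewrite ler_pM2r ?slot_gt0 // ler_nat.
by have := N_slot; have := start_rank_bound (k + n) l; lra.
Qed.

Lemma relieved_eventually k l : exists j, (k < j)%N && (loc j == l).
Proof.
have x_gt0 := slot_gt0.
set n := Num.truncn ((f - g + `|start_at k l|) / x).
have n_big : f - g + `|start_at k l| < n.+1%:R * x.
  by rewrite -ltr_pdivrMr // truncnS_gt.
have [/hasP[j]|/hasPn unrelieved] := boolP (has (fun j => loc j == l) (iota k.+1 n)).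
  by rewrite mem_iota => /andP[kj _] lj; exists j; rewrite kj.
exfalso.
have /unrelieved_bound : forall j, (k < j <= k + n)%N -> loc j != l.
  by move=> j kjn; apply: unrelieved; rewrite mem_iota; lia.
have : n.+1%:R * x <= (k + n).+1%:R * x by rewrite ler_pM2r // ler_nat; lia.
by have := ler_norm (start_at k l); lra.
Qed.

Lemma sortie_within_battery k l : exists k', (k < k')%N /\ loc k' = l /\
  k'%:R * x + g - start (st k) (serv (st k) l) <= f.
Proof.
have [k' /andP[kk' /eqP lk'] k'_min] := ex_minnP (relieved_eventually k l).
exists k'; do 2!split => //.
have unrelieved : forall j, (k < j <= k + (k' - k.+1))%N -> loc j != l.
  move=> j /andP[kj jk]; apply/eqP => lj.
  by have := k'_min j; rewrite kj lj eqxx => /(_ isT); lia.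
have := unrelieved_bound unrelieved.
have -> : (k + (k' - k.+1)).+1 = k' by lia.
by rewrite /start_at; lra.
Qed.

End HoRRSchedule.

Theorem theorem1 (R : archiRealFieldType) (N : nat) (f c g : R)
    (loc : nat -> 'I_N) :
  (1 <= N)%N -> 0 < f -> 0 <= c -> 0 < g -> 2 * g < f ->
  horr_choice f c g loc ->
  (forall k : nat,
     queue (run f c g loc k) != [::] /\
     ready (run f c g loc k) (dispatched (run f c g loc k))
       <= Num.max 0 (k.+1%:R * slot N f g - g)) /\
  (forall (k : nat) (l : 'I_N),
     exists k' : nat, (k < k')%N /\ loc k' = l /\
       k'%:R * slot N f g + g - start (run f c g loc k) (serv (run f c g loc k) l)
         <= f) /\
  (forall (t : R) (l : 'I_N), 0 <= t -> covered f c g loc l t).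
Proof.
move=> N_gt0 _ c_ge0 g_gt0 twog_lt_f horr; split; [|split].
- by move=> k; apply: backup_available.
- by move=> k l; apply: sortie_within_battery.
- by move=> t l; apply: covered_everywhere.
Qed.
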